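(* Every whirlygig is well-bicovered.
   Context: All graphs are finite and simple; ''subgraph'' means induced subgraph. A graph is well-bicovered if every vertex-inclusion-maximal induced bipartite subgraph has the same order. A maximal outerplanar graph (MOP) is an outerplanar graph to which no edge can be added while preserving outerplanarity. A whirlygig is constructed as follows: take a MOP $M$ with $m\ge 3$ vertices whose outer cycle is $u_1u_2\cdots u_mu_1$ (indices mod $m$); for each $i$ add a new vertex $t_i$ adjacent only to $u_i$ and $u_{i+1}$, and another new vertex $s_i$ adjacent only to $t_i$ and $u_i$. The case $m=2$ is also allowed, treating the MOP $K_2$ on $u_1,u_2$ as a cycle with two edges $u_1u_2$ and $u_2u_1$ and performing the same construction (yielding $P_6^2$). *)

From mathcomp Require Import all_boot.
Set Implicit Arguments. Unset Strict Implicit. Unset Printing Implicit Defensive.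

Definition independent (T : finType) (e : rel T) (A : {set T}) : bool :=
  [forall x in A, forall y in A, ~~ e x y].

Definition ind_bipartite (T : finType) (e : rel T) (S : {set T}) : bool :=
  [exists A : {set T}, (A \subset S) && independent e A && independent e (S :\: A)].

Definition well_bicovered (T : finType) (e : rel T) : Prop :=
  forall S1 S2 : {set T},
    maxset (ind_bipartite e) S1 -> maxset (ind_bipartite e) S2 -> #|S1| = #|S2|.

Definition cyc_adj (m : nat) (i j : 'I_m) : bool :=
  (val j == (val i).+1 %% m) || (val i == (val j).+1 %% m).

(* chords {a,b} and {c,d} of the polygon with vertices 0..m-1 (in this cyclic
   order) cross in their interiors *)
Definition crossing (m : nat) (a b c d : 'I_m) : bool :=
  let a' := minn a b in let b' := maxn a b in
  let c' := minn c d in let d' := maxn c d in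
  ((a' < c') && (c' < b') && (b' < d')) || ((c' < a') && (a' < d') && (d' < b')).

(* ch is a maximal set of pairwise non-crossing chords of the m-gon,
   i.e. a triangulation of the polygon: the graph with edges
   cycle edges + ch is a MOP whose outer cycle is u_0 u_1 ... u_{m-1} u_0. *)
Definition MOP_chords (m : nat) (ch : rel 'I_m) : Prop :=
  [/\ symmetric ch,
      irreflexive ch,
      (forall i j, ch i j -> ~~ cyc_adj i j),
      (forall a b c d, ch a b -> ch c d -> ~~ crossing a b c d) &
      (forall i j, i != j -> ~~ cyc_adj i j -> ~~ ch i j ->
         exists c d, ch c d && crossing i j c d)].

Definition mop_adj (m : nat) (ch : rel 'I_m) : rel 'I_m :=
  fun i j => cyc_adj i j || ch i j.

(* vertices: inl i = u_i, inr (inl i) = t_i, inr (inr i) = s_i *)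
Definition wvert (m : nat) : finType := ('I_m + ('I_m + 'I_m))%type.

(* one-directional edge list *)
Definition whirl_edge0 (m : nat) (ch : rel 'I_m) (x y : wvert m) : bool :=
  match x, y with
  | inl i, inl j => mop_adj ch i j
  | inr (inl i), inl j => (j == i) || (val j == (val i).+1 %% m)
  | inr (inr i), inr (inl j) => j == i
  | inr (inr i), inl j => j == i
  | _, _ => false
  end.

Definition whirl_adj (m : nat) (ch : rel 'I_m) : rel (wvert m) :=
  fun x y => whirl_edge0 ch x y || whirl_edge0 ch y x.

From mathcomp Require Import all_boot.
From mathcomp Require Import zify.
Set Implicit Arguments. Unset Strict Implicit. Unset Printing Implicit Defensive.

(* The vertices of a whirlygig split into the m triangles {s_i, t_i, u_i}.
   An induced bipartite subgraph meets each triangle in at most two vertices,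
   and a maximal one in exactly two: s_i is adjacent only to t_i and u_i, and
   t_i only to s_i, u_i and u_(i+1), so with fewer than two vertices present
   one can add s_i, or trade s_i for t_i and put s_i back, each time adding a
   vertex with at most one neighbour in the set, which keeps it bipartite.
   Hence every maximal induced bipartite subgraph has order 2m. *)

Section InducedBipartite.
Variables (T : finType) (e : rel T).
Hypotheses (e_sym : symmetric e) (e_irr : irreflexive e).

Lemma independentP (A : {set T}) :
  reflect {in A &, forall x y, ~~ e x y} (independent e A).
Proof.
apply: (iffP forall_inP) => [H x y xA yA | H x xA].
  by have /forall_inP := H x xA; apply.
by apply/forall_inP => y; apply: H.
Qed.

Lemma ind_bipartiteP (S : {set T}) :
  reflect (exists A : {set T}, [/\ A \subset S, independent e A & independent e (S :\: A)])
          (ind_bipartite e S).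
Proof.
apply: (iffP existsP) => [[A /andP [/andP [? ?] ?]] | [A [? ? ?]]]; exists A => //.
by apply/andP; split; first apply/andP.
Qed.

Lemma independentS (A B : {set T}) : B \subset A -> independent e A -> independent e B.
Proof.
by move=> /subsetP sBA /independentP indA; apply/independentP => x y /sBA xA /sBA; apply: indA.
Qed.

Lemma ind_bipartiteS (S S' : {set T}) :
  S' \subset S -> ind_bipartite e S -> ind_bipartite e S'.
Proof.
move=> sS'S /ind_bipartiteP [A [_ indA indSA]]; apply/ind_bipartiteP.
exists (A :&: S'); split; first exact: subsetIr.
  by apply: independentS indA; apply: subsetIl.
apply: independentS indSA; rewrite setDIr setDv setU0.
by apply: setSD.
Qed.

Lemma ind_bipartiteU1 (S : {set T}) v w :
  {in S, forall x, e v x -> x = w} -> ind_bipartite e S -> ind_bipartite e (v |: S).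
Proof.
move=> nbr_v /ind_bipartiteP [A [sAS /independentP indA /independentP indSA]].
apply/ind_bipartiteP; case wA: (w \in A).
- exists A; split; [exact: subset_trans sAS (subsetUr _ _) | exact/independentP |].
  apply/independentP => x y /[!inE] /andP [xA xS] /andP [yA yS].
  case/orP: xS => [/eqP-> | xS]; case/orP: yS => [/eqP-> | yS]; rewrite ?e_irr //.
  + by apply/negP => /(nbr_v _ yS) yw; rewrite yw wA in yA.
  + by rewrite e_sym; apply/negP => /(nbr_v _ xS) xw; rewrite xw wA in xA.
  + by apply: indSA; rewrite inE ?xA ?yA.
- exists (v |: A); split; first by rewrite setUS.
  + apply/independentP => x y /[!inE].
    case/orP=> [/eqP-> | xA]; case/orP=> [/eqP-> | yA]; rewrite ?e_irr //.
    * by apply/negP => /(nbr_v _ (subsetP sAS _ yA)) yw; rewrite yw wA in yA.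
    * by rewrite e_sym; apply/negP => /(nbr_v _ (subsetP sAS _ xA)) xw; rewrite xw wA in xA.
    * exact: indA.
  + have sub : (v |: S) :\: (v |: A) \subset S :\: A.
      by apply/subsetP => x /[!inE]; case: (x == v).
    by apply/independentP => x y /(subsetP sub) xSA /(subsetP sub); apply: indSA.
Qed.

Lemma ind_bipartite_triangle (S : {set T}) a b c :
  e a b -> e b c -> e a c -> ind_bipartite e S -> (a \in S) + (b \in S) + (c \in S) <= 2.
Proof.
move=> ab bc ac /ind_bipartiteP [A [_ /independentP indA /independentP indSA]].
have side x y : x \in S -> y \in S -> e x y -> (x \in A) != (y \in A).
  move=> xS yS exy; case xA: (x \in A); case yA: (y \in A) => //.
    by rewrite (negbTE (indA x y xA yA)) in exy.
  have [xSA ySA] : x \in S :\: A /\ y \in S :\: A by rewrite !inE xA yA.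
  by rewrite (negbTE (indSA x y xSA ySA)) in exy.
case aS: (a \in S); case bS: (b \in S); case cS: (c \in S) => //.
move: (side a b aS bS ab) (side b c bS cS bc) (side a c aS cS ac).
by case: (a \in A); case: (b \in A); case: (c \in A).
Qed.

Lemma maxset_ind_bipartiteU1 (S : {set T}) v :
  maxset (ind_bipartite e) S -> ind_bipartite e (v |: S) -> v \in S.
Proof.
by move=> maxS /(maxsetsup maxS) /(_ (subsetUr _ _)) <-; rewrite setU11.
Qed.

Section PendantTriangle.
Variables s t u w : T.
Hypotheses (e_st : e s t) (e_tu : e t u) (e_su : e s u).
Hypothesis nbr_s : forall x, e s x -> x = t \/ x = u.
Hypothesis nbr_t : forall x, e t x -> [\/ x = s, x = u | x = w].

Lemma maxset_pendant_triangle (S : {set T}) :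
  maxset (ind_bipartite e) S -> (s \in S) + (t \in S) + (u \in S) = 2.
Proof.
move=> maxS; have bipS := maxsetp maxS.
apply/eqP; rewrite eqn_leq ind_bipartite_triangle //= leqNgt; apply/negP => lt2.
case sS: (s \in S).
- have tS : t \notin S by move: lt2; rewrite sS; case: (t \in S).
  have uS : u \notin S by move: lt2; rewrite sS; case: (t \in S); case: (u \in S).
  have bip_t : ind_bipartite e (t |: (S :\ s)).
    apply: (@ind_bipartiteU1 _ _ w); last exact: ind_bipartiteS (subsetDl _ _) bipS.
    move=> x; rewrite !inE => /andP [xs xS] /nbr_t [xe | xe | //].
      by rewrite xe eqxx in xs.
    by rewrite -xe xS in uS.
  have bip_st : ind_bipartite e (s |: (t |: (S :\ s))).
    apply: (@ind_bipartiteU1 _ _ t) bip_t.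
    move=> x; rewrite !inE => /orP [/eqP -> // | /andP [_ xS]] /nbr_s [// | xe].
    by rewrite -xe xS in uS.
  have tUS : t |: S = s |: (t |: (S :\ s)) by rewrite setUCA setD1K.
  by move/negP: tS; apply; apply: (maxset_ind_bipartiteU1 maxS); rewrite tUS.
- have [x0 nbr_s_S] : exists x0, {in S, forall x, e s x -> x = x0}.
    case tS: (t \in S); [exists t | exists u] => x xS /nbr_s [] xe //.
      by move: lt2; rewrite sS tS -xe xS.
    by rewrite -xe xS in tS.
  by rewrite (maxset_ind_bipartiteU1 maxS (ind_bipartiteU1 nbr_s_S bipS)) in sS.
Qed.

End PendantTriangle.
End InducedBipartite.

Section Whirlygig.
Variables (m : nat) (ch : rel 'I_m).
Local Notation e := (whirl_adj ch).

Definition u_vert (i : 'I_m) : wvert m := inl i.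
Definition t_vert (i : 'I_m) : wvert m := inr (inl i).
Definition s_vert (i : 'I_m) : wvert m := inr (inr i).

Lemma card_wvert_set (S : {set wvert m}) :
  #|S| = \sum_(i < m) ((s_vert i \in S) + (t_vert i \in S) + (u_vert i \in S)).
Proof.
rewrite -sum1_card big_mkcond big_sumType /= big_sumType /= -!big_split /=.
by apply: eq_bigr => i _; rewrite /s_vert /t_vert /u_vert; do 3!case: (_ \in S).
Qed.

Lemma whirl_adj_sym : symmetric e.
Proof. by move=> x y; rewrite /whirl_adj orbC. Qed.

Lemma whirl_adj_irr : 1 < m -> irreflexive ch -> irreflexive e.
Proof.
move=> m_gt1 ch_irr [i | [i | i]]; rewrite /whirl_adj /= ?orbb //.
rewrite /mop_adj /cyc_adj ch_irr orbF orbb.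
have i_lt_m := ltn_ord i.
apply/negbTE/eqP; case: (ltngtP i.+1 m) => [Si_lt | Si_gt | Si_eq].
- by rewrite modn_small //; lia.
- by lia.
- by rewrite Si_eq modnn => i0; rewrite -Si_eq i0 in m_gt1.
Qed.

Lemma whirl_adj_st i : e (s_vert i) (t_vert i). Proof. by rewrite /whirl_adj /= eqxx. Qed.
Lemma whirl_adj_su i : e (s_vert i) (u_vert i). Proof. by rewrite /whirl_adj /= eqxx. Qed.
Lemma whirl_adj_tu i : e (t_vert i) (u_vert i). Proof. by rewrite /whirl_adj /= eqxx. Qed.

Lemma whirl_nbr_s i x : e (s_vert i) x -> x = t_vert i \/ x = u_vert i.
Proof. by case: x => [j | [j | j]]; rewrite /whirl_adj /= ?orbF // => /eqP->; [right | left]. Qed.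

Lemma whirl_nbr_t i x :
  e (t_vert i) x -> [\/ x = s_vert i, x = u_vert i | x = u_vert (ordS i)].
Proof.
case: x => [j | [j | j]]; rewrite /whirl_adj /= ?orbF //.
  case/orP => /eqP eq_j; first by constructor 2; rewrite eq_j.
  by constructor 3; congr inl; apply: val_inj.
by move/eqP <-; constructor 1.
Qed.

Lemma whirl_maxset_card (S : {set wvert m}) : 1 < m -> irreflexive ch ->
  maxset (ind_bipartite e) S -> #|S| = m * 2.
Proof.
move=> m_gt1 ch_irr maxS.
rewrite card_wvert_set (eq_bigr (fun=> 2)) ?sum_nat_const ?card_ord // => i _.
exact: (maxset_pendant_triangle whirl_adj_sym (whirl_adj_irr m_gt1 ch_irr)
          (whirl_adj_st i) (whirl_adj_tu i) (whirl_adj_su i)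
          (@whirl_nbr_s i) (@whirl_nbr_t i) maxS).
Qed.

End Whirlygig.

Theorem mainTheorem18 (m : nat) (hm : 2 <= m) (ch : rel 'I_m) :
  MOP_chords ch -> well_bicovered (whirl_adj ch).
Proof.
case=> _ ch_irr _ _ _ S1 S2 maxS1 maxS2.
by rewrite (whirl_maxset_card hm ch_irr maxS1) (whirl_maxset_card hm ch_irr maxS2).
Qed.
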